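(* Let $n\ge2$ and $A,B\in M_n(\mathbb C)$. Then $\mathbb C A=\mathbb C B$ if and only if $({}^\perp A)\cap\mathcal R_1=({}^\perp B)\cap\mathcal R_1$.
   Context: $M_n(\mathbb C)$ carries the operator (spectral) norm. $X\perp Y$ (Birkhoff–James orthogonality) means $\|X+\lambda Y\|\ge\|X\|$ for all $\lambda\in\mathbb C$; ${}^\perp A:=\{X: X\perp A\}$. $\mathcal R_1:=\{X\in M_n(\mathbb C):\mathrm{rk}\,X=1\}$. *)

From HB Require Import structures.
From mathcomp Require Import all_boot all_order all_algebra.
From mathcomp Require Import complex.
From mathcomp Require Import classical_sets reals.
Set Implicit Arguments. Unset Strict Implicit. Unset Printing Implicit Defensive.
Import Order.TTheory GRing.Theory Num.Theory.
Local Open Scope ring_scope.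
Local Open Scope classical_set_scope.

Definition vnorm (R : realType) (n : nat) (v : 'cV[R[i]]_n) : R :=
  Num.sqrt (\sum_(k < n) ((complex.Re (v k 0)) ^+ 2 + (complex.Im (v k 0)) ^+ 2)).

Definition opnorm (R : realType) (n : nat) (X : 'M[R[i]]_n) : R :=
  sup [set vnorm (X *m v) | v in [set v : 'cV[R[i]]_n | vnorm v <= 1]].

Definition BJorth (R : realType) (n : nat) (X Y : 'M[R[i]]_n) : Prop :=
  forall lam : R[i], opnorm X <= opnorm (X + lam *: Y).

Definition leftperp (R : realType) (n : nat) (A : 'M[R[i]]_n) : set 'M[R[i]]_n :=
  [set X | BJorth X A].

Definition rank_one (R : realType) (n : nat) : set 'M[R[i]]_n :=
  [set X | \rank X = 1%N].

Definition cline (R : realType) (n : nat) (A : 'M[R[i]]_n) : set 'M[R[i]]_n :=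
  [set c *: A | c in [set: R[i]]].

(* For a rank-one matrix X = c r the operator norm equals the Frobenius norm,
   attained at the unit vector v = r^* / |r|.  Comparing ||X + lam M|| with
   the Frobenius norm of X + lam M, and with |(X + lam M) v|, shows that X is
   Birkhoff-James orthogonal to M iff the Frobenius inner product <X, M>
   vanishes.  Taking X = conj(a)^T conj(b) turns <X, M> into the bilinear form
   a M b^T, so equal sets of rank-one matrices orthogonal to A and to B force
   A and B to have the same zeros as bilinear forms; such forms are
   proportional, since linear functionals with the same kernel are.  The
   converse holds because orthogonality to A depends only on the line C A. *)

From HB Require Import structures.
From mathcomp Require Import all_boot all_order all_algebra.
From mathcomp Require Import complex.
From mathcomp Require Import boolp classical_sets reals.
From mathcomp Require Import ring.
Set Implicit Arguments. Unset Strict Implicit. Unset Printing Implicit Defensive.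
Import Order.TTheory GRing.Theory Num.Theory.
Local Open Scope complex_scope.
Local Open Scope ring_scope.
Local Open Scope classical_set_scope.

Section ComplexSqNorm.
Variable R : realType.
Implicit Types (a z w : R[i]) (r Q : R).

Definition sqnormc z : R := complex.Re z ^+ 2 + complex.Im z ^+ 2.

Lemma sqnormc_ge0 z : 0 <= sqnormc z.
Proof. by rewrite addr_ge0 ?sqr_ge0. Qed.

Lemma sqnormc_eq0 z : (sqnormc z == 0) = (z == 0).
Proof.
case: z => x y; rewrite paddr_eq0 ?sqr_ge0 // !sqrf_eq0 eq_complex.
by rewrite [in RHS]/=.
Qed.

Lemma sqnormc0 : sqnormc 0 = 0.
Proof. by apply/eqP; rewrite sqnormc_eq0. Qed.

Lemma sqnormc_gt0 z : (0 < sqnormc z) = (z != 0).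
Proof. by rewrite lt_def sqnormc_ge0 sqnormc_eq0 andbT. Qed.

Lemma sqnormcM z w : sqnormc (z * w) = sqnormc z * sqnormc w.
Proof. by case: z => x y; case: w => u v; rewrite /sqnormc /=; ring. Qed.

Lemma sqnormcJ z : sqnormc z^* = sqnormc z.
Proof. by case: z => x y; rewrite /sqnormc /=; ring. Qed.

Lemma sqnormc_real r : sqnormc r%:C = r ^+ 2.
Proof. by rewrite /sqnormc /=; ring. Qed.

Lemma mulJc z : z^* * z = (sqnormc z)%:C.
Proof.
case: z => x y; apply/eqP; rewrite /sqnormc eq_complex /=.
by apply/andP; split; apply/eqP; ring.
Qed.

Lemma Re_sum (I : finType) (F : I -> R[i]) :
  complex.Re (\sum_k F k) = \sum_k complex.Re (F k).
Proof. by apply: big_morph => // -[? ?] [? ?]. Qed.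

(* Attained at [lam = - a^* / Q]. *)
Lemma quadratic_descent a Q : Q != 0 ->
  exists lam, 2 * complex.Re (lam * a) + sqnormc lam * Q = - (sqnormc a / Q).
Proof.
move=> Q0; exists ((- Q^-1)%:C * a^*).
rewrite -mulrA mulJc -rmorphM sqnormcM sqnormcJ sqnormc_real /=.
by field.
Qed.

End ComplexSqNorm.

Section FiniteSums.
Variables (R : realType) (I : finType).
Implicit Types (u v : I -> R[i]) (lam : R[i]).

Definition sqnorm u : R := \sum_k sqnormc (u k).
Definition dotc u v : R[i] := \sum_k (u k)^* * v k.

Lemma sqnorm_ge0 u : 0 <= sqnorm u.
Proof. by apply: sumr_ge0 => k _; apply: sqnormc_ge0. Qed.

Lemma sqnorm_eq0 u : sqnorm u = 0 -> forall k, u k = 0.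
Proof.
move/eqP; rewrite psumr_eq0 => [/allP u0 k|k _]; last exact: sqnormc_ge0.
by apply/eqP; rewrite -sqnormc_eq0; apply: u0; rewrite mem_index_enum.
Qed.

Lemma eq_sqnorm u v : u =1 v -> sqnorm u = sqnorm v.
Proof. by move=> uv; apply: eq_bigr => k _; rewrite uv. Qed.

Lemma eq_dotcl u u' v : u =1 u' -> dotc u v = dotc u' v.
Proof. by move=> uu'; apply: eq_bigr => k _; rewrite uu'. Qed.

Lemma dotc0r u v : sqnorm v = 0 -> dotc u v = 0.
Proof. by move=> v0; apply: big1 => k _; rewrite (sqnorm_eq0 v0) mulr0. Qed.

Lemma dotcZr u lam v : dotc u (fun k => lam * v k) = lam * dotc u v.
Proof. by rewrite mulr_sumr; apply: eq_bigr => k _; rewrite mulrCA. Qed.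

Lemma dotcZl lam u v : dotc (fun k => lam * u k) v = lam^* * dotc u v.
Proof. by rewrite mulr_sumr; apply: eq_bigr => k _; rewrite rmorphM mulrA. Qed.

Lemma dotcc u : dotc u u = (sqnorm u)%:C.
Proof.
rewrite /sqnorm (big_morph (real_complex R) (@rmorphD _ _ _) (@rmorph0 _ _ _)).
by apply: eq_bigr => k _; rewrite mulJc.
Qed.

Lemma sqnormZ lam u : sqnorm (fun k => lam * u k) = sqnormc lam * sqnorm u.
Proof. by rewrite mulr_sumr; apply: eq_bigr => k _; rewrite sqnormcM. Qed.

Lemma sqnorm_addZ u lam v :
  sqnorm (fun k => u k + lam * v k) =
  sqnorm u + 2 * complex.Re (lam * dotc u v) + sqnormc lam * sqnorm v.
Proof.
rewrite -sqnormZ -dotcZr Re_sum mulr_sumr -!big_split /=.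
apply: eq_bigr => k _; case: (u k) => x y; case: (lam * v k) => x' y'.
by rewrite /sqnormc /=; ring.
Qed.

(* Cauchy--Schwarz: expand [sqnorm (u + lam v) >= 0] at the minimising [lam]. *)
Lemma sqnormc_dotc_le u v : sqnormc (dotc u v) <= sqnorm u * sqnorm v.
Proof.
have [v0|v_neq0] := eqVneq (sqnorm v) 0.
  by rewrite dotc0r // v0 mulr0 sqnormc0.
have [lam lamE] := quadratic_descent (dotc u v) v_neq0.
have := sqnorm_ge0 (fun k => u k + lam * v k).
rewrite sqnorm_addZ -addrA lamE subr_ge0 ler_pdivrMr //.
by rewrite lt_def v_neq0 sqnorm_ge0.
Qed.

End FiniteSums.

Section MatrixNorms.
Variables (R : realType) (n : nat).
Implicit Types (M X : 'M[R[i]]_n) (v : 'cV[R[i]]_n).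

Definition coords v : 'I_n -> R[i] := fun k => v k 0.
Definition entries M : 'I_n * 'I_n -> R[i] := fun ij => M ij.1 ij.2.
Definition frob2 M : R := sqnorm (entries M).
Definition frob_dot X M : R[i] := dotc (entries X) (entries M).

Lemma vnormE v : vnorm v = Num.sqrt (sqnorm (coords v)).
Proof. by []. Qed.

Lemma frob2_ge0 M : 0 <= frob2 M.
Proof. exact: sqnorm_ge0. Qed.

Lemma frob2_addZ X lam M :
  frob2 (X + lam *: M) =
  frob2 X + 2 * complex.Re (lam * frob_dot X M) + sqnormc lam * frob2 M.
Proof.
rewrite -sqnorm_addZ; congr sqnorm; apply: funext => ij.
by rewrite /entries !mxE.
Qed.

Lemma sqnorm_mulmx_le M v :
  sqnorm (coords (M *m v)) <= frob2 M * sqnorm (coords v).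
Proof.
rewrite /frob2 /sqnorm -(pair_bigA _ (fun i j => sqnormc (M i j))) mulr_suml.
apply: ler_sum => i _; rewrite /coords mxE.
have -> : \sum_j M i j * v j 0 = dotc (fun j => (M i j)^*) (coords v).
  by rewrite /dotc; apply: eq_bigr => j _; rewrite conjCK.
apply: le_trans (sqnormc_dotc_le _ _) _.
by rewrite /sqnorm (eq_bigr _ (fun j _ => sqnormcJ (M i j))).
Qed.

Lemma vnorm_mulmx_le M v : vnorm v <= 1 -> vnorm (M *m v) <= Num.sqrt (frob2 M).
Proof.
rewrite !vnormE -sqrtr1 ler_sqrt // => v1; rewrite ler_sqrt ?frob2_ge0 //.
apply: le_trans (sqnorm_mulmx_le M v) _.
by rewrite ler_piMr ?frob2_ge0.
Qed.

Lemma opnorm_le_frob M : opnorm M <= Num.sqrt (frob2 M).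
Proof.
apply: ge_sup; last by move=> _ [v /= v1 <-]; apply: vnorm_mulmx_le.
exists (vnorm (M *m 0)), 0 => //=.
by rewrite vnormE /sqnorm big1 ?sqrtr0 // => k _; rewrite /coords mxE sqnormc0.
Qed.

Lemma vnorm_le_opnorm M v : vnorm v <= 1 -> vnorm (M *m v) <= opnorm M.
Proof.
move=> v1; apply: ub_le_sup; last by exists v.
by exists (Num.sqrt (frob2 M)) => _ [w /= w1 <-]; apply: vnorm_mulmx_le.
Qed.

End MatrixNorms.

Section RankOne.
Variables (R : realType) (n : nat).
Implicit Types (M X : 'M[R[i]]_n) (v : 'cV[R[i]]_n).

Lemma rank_one_outer X : \rank X = 1%N ->
  exists (c : 'cV_n) (r : 'rV_n), X = c *m r.
Proof.
move=> rkX; move: (col_base X) (row_base X) (mulmx_base X).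
by rewrite rkX => c r <-; exists c, r.
Qed.

Lemma coords_mulmx_addZ X lam M v :
  coords ((X + lam *: M) *m v) = fun i => coords (X *m v) i + lam * coords (M *m v) i.
Proof. by apply: funext => i; rewrite /coords mulmxDl -scalemxAl !mxE. Qed.

Lemma outer_norming_vector (c : 'cV[R[i]]_n) (r : 'rV[R[i]]_n) : r != 0 ->
  exists v, [/\ sqnorm (coords v) = 1,
    sqnorm (coords (c *m r *m v)) = frob2 (c *m r) &
    forall M, dotc (coords (c *m r *m v)) (coords (M *m v)) = frob_dot (c *m r) M].
Proof.
move=> r_neq0; pose W := sqnorm (fun j => r 0 j).
have W_gt0 : 0 < W.
  rewrite lt_def sqnorm_ge0 andbT; apply: contra r_neq0 => /eqP W0.
  by apply/eqP/matrixP => i j; rewrite ord1 mxE (sqnorm_eq0 W0).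
pose s := Num.sqrt W; have s_gt0 : 0 < s by rewrite sqrtr_gt0.
have s2 : s ^+ 2 = W by rewrite sqr_sqrtr ?ltW.
pose v := \col_j ((s^-1)%:C * (r 0 j)^*).
have cr_ij i j : (c *m r) i j = c i 0 * r 0 j by rewrite mxE big_ord1.
have rv : (r *m v) 0 0 = s%:C.
  rewrite mxE (eq_bigr (fun j => (s^-1)%:C * ((r 0 j)^* * r 0 j))); last first.
    by move=> j _; rewrite mxE mulrCA [r 0 j * _]mulrC.
  rewrite -mulr_sumr [X in _ * X](dotcc (fun j => r 0 j)) -rmorphM /= -/W -s2.
  by rewrite expr2 mulKf ?gt_eqF.
have crv i : coords (c *m r *m v) i = s%:C * c i 0.
  by rewrite /coords -mulmxA mxE big_ord1 rv mulrC.
exists v; split.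
- rewrite /sqnorm (eq_bigr (fun j => s^-1 ^+ 2 * sqnormc (r 0 j))) => [|j _].
    by rewrite -mulr_sumr -[\sum_(j < n) _]/W -s2 exprVn mulVf // expf_neq0 // gt_eqF.
  by rewrite /coords mxE sqnormcM sqnormc_real sqnormcJ.
- rewrite (eq_sqnorm crv) sqnormZ sqnormc_real s2 /frob2 /sqnorm.
  rewrite -(pair_bigA _ (fun i j => sqnormc ((c *m r) i j))) big_distrr /=.
  apply: eq_bigr => i _; rewrite /W /sqnorm mulrC mulr_sumr; apply: eq_bigr => j _.
  by rewrite cr_ij sqnormcM.
- move=> M; rewrite (eq_dotcl _ crv) dotcZl conj_Creal ?complex_real //.
  have ss : s%:C * (s^-1)%:C = 1 :> R[i] by rewrite -rmorphM mulfV ?gt_eqF.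
  rewrite /frob_dot /dotc -(pair_bigA _ (fun i j => ((c *m r) i j)^* * M i j)) mulr_sumr.
  apply: eq_bigr => i _; rewrite /coords mxE !mulr_sumr; apply: eq_bigr => j _.
  rewrite /= cr_ij mxE rmorphM -[RHS]mul1r -ss; ring.
Qed.

Lemma rank_one_norming_vector X : \rank X = 1%N ->
  exists v, [/\ sqnorm (coords v) = 1, sqnorm (coords (X *m v)) = frob2 X &
    forall M, dotc (coords (X *m v)) (coords (M *m v)) = frob_dot X M].
Proof.
move=> rkX; have [c [r cr]] := rank_one_outer rkX; rewrite cr.
by apply: outer_norming_vector; apply/eqP => r0; move: rkX; rewrite cr r0 mulmx0 mxrank0.
Qed.

Lemma BJorth_rank_oneE X M : \rank X = 1%N -> BJorth X M <-> frob_dot X M = 0.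
Proof.
move=> rkX; have [v [v1 Xv dotXM]] := rank_one_norming_vector rkX.
have v_le1 : vnorm v <= 1 by rewrite vnormE v1 sqrtr1.
have opX : opnorm X = Num.sqrt (frob2 X).
  by apply/le_anti; rewrite opnorm_le_frob -Xv -vnormE vnorm_le_opnorm.
split=> [BJ | XM0 lam].
- apply/eqP; apply: contraT => XM_neq0.
  have M_neq0 : frob2 M != 0 by apply: contra XM_neq0 => /eqP M0; rewrite /frob_dot dotc0r.
  have [lam lamE] := quadratic_descent (frob_dot X M) M_neq0.
  have := le_trans (BJ lam) (opnorm_le_frob (X + lam *: M)).
  rewrite opX ler_sqrt ?frob2_ge0 // frob2_addZ -addrA lamE lerDl oppr_ge0 leNgt.
  by rewrite divr_gt0 // ?sqnormc_gt0 // lt_def M_neq0 frob2_ge0.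
- rewrite opX -Xv -vnormE; apply: le_trans (vnorm_le_opnorm _ v_le1).
  rewrite !vnormE ler_sqrt ?sqnorm_ge0 // coords_mulmx_addZ sqnorm_addZ dotXM XM0.
  by rewrite mulr0 /= mulr0 addr0 lerDl mulr_ge0 ?sqnormc_ge0 ?sqnorm_ge0.
Qed.

End RankOne.

Section BilinearForm.
Variables (K : fieldType) (n : nat).
Implicit Types (A B M : 'M[K]_n) (a b : 'rV[K]_n).

Definition bform M a b : K := (a *m M *m b^T) 0 0.

Lemma bform_scalarl M b : scalar (bform M ^~ b).
Proof. by move=> t a a'; rewrite /bform !mulmxDl -!scalemxAl !mxE. Qed.

Lemma bform_scalarr M a : scalar (bform M a).
Proof. by move=> t b b'; rewrite /bform linearD linearZ /= mulmxDr -scalemxAr !mxE. Qed.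

Lemma bformDr M a b b' : bform M a (b + b') = bform M a b + bform M a b'.
Proof. by have := bform_scalarr M a 1 b b'; rewrite scale1r mul1r. Qed.

Lemma bform0l M b : bform M 0 b = 0.
Proof. by rewrite /bform !mul0mx mxE. Qed.

Lemma bform0r M a : bform M a 0 = 0.
Proof. by rewrite /bform trmx0 mulmx0 mxE. Qed.

Lemma bform_delta M p q : bform M (delta_mx 0 p) (delta_mx 0 q) = M p q.
Proof. by rewrite /bform trmx_delta -rowE -colE !mxE. Qed.

Lemma scalar_same_zeros (V : lmodType K) (phi psi : V -> K) :
  scalar phi -> scalar psi -> (forall x, phi x = 0 <-> psi x = 0) ->
  forall x0, phi x0 != 0 -> forall x, psi x = psi x0 / phi x0 * phi x.
Proof.
move=> phiL psiL same x0 phi0 x.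
have : phi ((- (phi x / phi x0)) *: x0 + x) = 0 by rewrite phiL mulNr divfK // addNr.
by move/same; rewrite psiL => E; rewrite -[psi x]subr0 -E; field.
Qed.

Lemma bform_same_zeros A B :
  (forall a b, bform A a b = 0 <-> bform B a b = 0) -> exists2 c, c != 0 & B = c *: A.
Proof.
move=> same; have entry0 p q : A p q = 0 <-> B p q = 0 by rewrite -!bform_delta.
case: (pickP (fun pq : 'I_n * 'I_n => A pq.1 pq.2 != 0)) => [[p q] /= Apq | A0]; last first.
  exists 1; first exact: oner_neq0.
  apply/matrixP => i j; rewrite scale1r; move/negbFE/eqP: (A0 (i, j)) => /= Aij.
  by rewrite Aij; apply/(entry0 i j).
pose e_p : 'rV[K]_n := delta_mx 0 p; pose e_q : 'rV[K]_n := delta_mx 0 q.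
pose c := B p q / A p q.
have Aeq : bform A e_p e_q != 0 by rewrite bform_delta.
have row_p v : bform B e_p v = c * bform A e_p v.
  rewrite (scalar_same_zeros (bform_scalarr A e_p) (bform_scalarr B e_p) (same e_p) Aeq).
  by rewrite !bform_delta.
have on_support v : bform A e_p v != 0 -> forall u, bform B u v = c * bform A u v.
  move=> Av u.
  rewrite (scalar_same_zeros (bform_scalarl A v) (bform_scalarl B v) (same^~ v) Av).
  by rewrite row_p mulfK.
have BcA u v : bform B u v = c * bform A u v.
  have [Av0|/on_support//] := eqVneq (bform A e_p v) 0.
  have Avq : bform A e_p (v + e_q) != 0 by rewrite bformDr Av0 add0r.
  apply: (addIr (bform B u e_q)).
  rewrite -bformDr (on_support _ Avq) (on_support _ Aeq).
  by rewrite -mulrDr -bformDr.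
exists c; first by rewrite mulf_neq0 ?invr_eq0 //; apply: contra Apq => /eqP/(entry0 p q) ->.
by apply/matrixP => i j; rewrite mxE -!bform_delta BcA.
Qed.

Lemma rank_outer (c : 'cV[K]_n) (r : 'rV[K]_n) : c != 0 -> r != 0 -> \rank (c *m r) = 1%N.
Proof.
move=> c0 r0; apply/eqP; rewrite mxrankMfree; last first.
  by rewrite /row_free eqn_leq rank_leq_row lt0n mxrank_eq0.
by rewrite eqn_leq rank_leq_col lt0n mxrank_eq0.
Qed.

End BilinearForm.

Section Orthogonality.
Variables (R : realType) (n : nat).
Implicit Types (A B M : 'M[R[i]]_n) (a b : 'rV[R[i]]_n).

Lemma frob_dot_conj_outer M a b :
  frob_dot ((map_mx Num.conj a)^T *m map_mx Num.conj b) M = bform M a b.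
Proof.
rewrite /frob_dot /dotc /bform mxE.
set X := (map_mx Num.conj a)^T *m map_mx Num.conj b.
rewrite -(pair_bigA _ (fun i j => (X i j)^* * M i j)) /=.
rewrite exchange_big /=; apply: eq_bigr => j _; rewrite !mxE mulr_suml.
apply: eq_bigr => i _; rewrite !mxE big_ord1 !mxE rmorphM /= conjCK conjCK mulrAC.
by congr (_ * _ * _).
Qed.

Lemma same_perp_bform_zeros A B :
  leftperp A `&` @rank_one R n = leftperp B `&` @rank_one R n ->
  forall a b, bform A a b = 0 <-> bform B a b = 0.
Proof.
move=> perpAB a b.
have [->|a0] := eqVneq a 0; first by rewrite 2!bform0l; exact: iff_refl.
have [->|b0] := eqVneq b 0; first by rewrite 2!bform0r; exact: iff_refl.
pose X := (map_mx Num.conj a)^T *m map_mx Num.conj b.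
have rkX : \rank X = 1%N.
  apply: rank_outer; [rewrite trmx_eq0 map_mx_eq0; exact: a0 | rewrite map_mx_eq0; exact: b0].
have perpE C : (leftperp C `&` @rank_one R n) X <-> bform C a b = 0.
  rewrite -frob_dot_conj_outer -(BJorth_rank_oneE _ rkX).
  by split=> [[XC _] | XC]; [exact: XC | split; [exact: XC | exact: rkX]].
split=> /perpE XAB; apply/perpE; [rewrite -perpAB | rewrite perpAB]; exact: XAB.
Qed.

Lemma leftperp_cline A B : cline A B -> leftperp A `<=` leftperp B.
Proof. by case=> k _ <- X XA lam; rewrite scalerA; apply: XA. Qed.

Lemma cline_scale c A : c != 0 -> cline (c *: A) = cline A.
Proof.
move=> c0; apply/seteqP; split=> _ [k _ <-].
  by exists (k * c) => //; rewrite scalerA.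
by exists (k / c) => //; rewrite scalerA divfK.
Qed.

End Orthogonality.

Theorem lemma3p7 (R : realType) (n : nat) (hn : (2 <= n)%N)
    (A B : 'M[R[i]]_n) :
  cline A = cline B <->
  leftperp A `&` @rank_one R n = leftperp B `&` @rank_one R n.
Proof.
split=> [AB | /same_perp_bform_zeros/bform_same_zeros [c c0 ->]].
  have cline_refl C : cline C C by exists 1; [exact: I | exact: scale1r].
  apply/seteqP; split; apply: setSI; apply: leftperp_cline.
    by rewrite AB; exact: cline_refl.
  by rewrite -AB; exact: cline_refl.
by rewrite cline_scale.
Qed.
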